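(* Let $\frac23\le M<\frac34$. Algorithm D (defined in the context) has migration factor at most $M$, and on every input whose optimal offline makespan is $1$ it produces a schedule of makespan at most $2-M$. Hence its competitive ratio is at most $2-M$.
   Context: Model (two hierarchical machines with migration, bin stretching). Jobs $1,2,\dots,n$ arrive one by one ($n$ unknown in advance). Job $j$ has a size $p_j>0$ and a grade of service (GoS) $g_j\in\{1,2\}$; a job of GoS $1$ may only be processed on machine $m_1$, a job of GoS $2$ may be processed on $m_1$ or on $m_2$. The load of a machine is the total size of its jobs, the makespan is the maximum load. When job $j$ arrives, the algorithm must assign it, and may migrate previously arrived jobs (respecting GoS) of total size at most $M\cdot p_j$ (migration factor $M$). Bin stretching: the optimal offline makespan of the complete input is known in advance and scaled to $1$. The competitive ratio is the supremum over inputs of (algorithm's makespan)/(optimal makespan). Notation: $Y_{j}$ is the set of jobs on $m_2$ just after job $j$ has been handled, $y_j$ its total size, $y_0=0$; ''sorted $Y_{j-1}$'' lists $Y_{j-1}$ in non-increasing order of size; $w_j$ is the total size of the (current) set $W$. Algorithm D (parameter $M$). On arrival of job $j$: Step 2: if $g_j=1$ or $y_{j-1}\ge M$, assign $j$ to $m_1$. Step 3: else if $y_{j-1}+p_j\le 2-M$, assign $j$ to $m_2$. Step 4: else if $p_j\ge M$: let $W$ be the longest prefix of sorted $Y_{j-1}$ with total size at most $M\cdot p_j$ (possibly empty). If $y_{j-1}-w_j+p_j>2-M$, assign $j$ to $m_1$; otherwise migrate the jobs of $W$ to $m_1$ and assign $j$ to $m_2$. Step 5: else (so $p_j<M$): let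 $W$ be the shortest prefix of sorted $Y_{j-1}$ with total size at least $M/3$ (or $Y_{j-1}$ if none exists). If $w_j>\min\{2M/3,\,M\cdot p_j\}$, replace $W$ by $Y_{j-1}\setminus W$. Then, if $y_{j-1}-w_j+p_j>2-M$, assign $j$ to $m_1$; otherwise migrate the jobs of $W$ to $m_1$ and assign $j$ to $m_2$. *)

(* Two hierarchical machines with migration, bin stretching,
   Algorithm D. Jobs are indexed 0 .. n-1 (job j of the paper is index j-1). *)
From mathcomp Require Import all_boot all_order all_algebra.
Set Implicit Arguments. Unset Strict Implicit. Unset Printing Implicit Defensive.
Import Order.TTheory GRing.Theory Num.Theory.
Local Open Scope ring_scope.

(* Grade of service: G1 = GoS 1 (only m1), G2 = GoS 2 (m1 or m2). *)
Inductive gos := G1 | G2.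
Definition gos_eqb (a b : gos) : bool :=
  match a, b with G1, G1 | G2, G2 => true | _, _ => false end.

Section AlgD.
Variable R : realFieldType.

Definition jload (p : nat -> R) (s : seq nat) : R := \sum_(i <- s) p i.

Definition sortY (p : nat -> R) (Y : seq nat) : seq nat :=
  sort (fun a b => p b <= p a) Y.

(* length of the longest prefix of s with total size at most b
   (0, i.e. the empty prefix, if there is none) *)
Definition longest_le (p : nat -> R) (b : R) (s : seq nat) : nat :=
  last 0%N [seq k <- iota 0 (size s).+1 | jload p (take k s) <= b].

(* length of the shortest prefix of s with total size at least b
   (size s, i.e. all of s, if there is none) *)
Definition shortest_ge (p : nat -> R) (b : R) (s : seq nat) : nat :=
  head (size s) [seq k <- iota 0 (size s).+1 | b <= jload p (take k s)].

(* state: (jobs on m1, jobs on m2) *)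
Definition state := (seq nat * seq nat)%type.

(* Handling of job j by Algorithm D with parameter M, from state (X, Y).
   Returns the new state and the list of migrated jobs. *)
Definition stepD (M : R) (p : nat -> R) (g : nat -> gos) (j : nat)
    (st : state) : state * seq nat :=
  let: (X, Y) := st in
  let y := jload p Y in
  if gos_eqb (g j) G1 || (M <= y) then ((j :: X, Y), [::])            (* Step 2 *)
  else if y + p j <= 2 - M then ((X, j :: Y), [::])                    (* Step 3 *)
  else
    let sY := sortY p Y in
    (* (W, Y \ W) *)
    let WR :=
      if M <= p j then                                                   (* Step 4 *)
        let k := longest_le p (M * p j) sY in (take k sY, drop k sY)
      else                                                               (* Step 5 *)
        let k := shortest_ge p (M / 3) sY in
        if Num.min (2 * M / 3) (M * p j) < jload p (take k sY)
        then (drop k sY, take k sY) else (take k sY, drop k sY) in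
    let W := WR.1 in
    if 2 - M < y - jload p W + p j then ((j :: X, Y), [::])
    else ((W ++ X, j :: WR.2), W).

(* state just after job j-1 has been handled (i.e. after the first j jobs) *)
Fixpoint runD (M : R) (p : nat -> R) (g : nat -> gos) (j : nat) : state :=
  match j with
  | 0 => ([::], [::])
  | j'.+1 => (stepD M p g j' (runD M p g j')).1
  end.

Definition migratedD (M : R) (p : nat -> R) (g : nat -> gos) (j : nat) : seq nat :=
  (stepD M p g j (runD M p g j)).2.

Definition makespanD (M : R) (p : nat -> R) (g : nat -> gos) (n : nat) : R :=
  let: (X, Y) := runD M p g n in Num.max (jload p X) (jload p Y).

(* Offline schedules: a j = true means job j is on m2. *)
Definition feasible (n : nat) (g : nat -> gos) (a : nat -> bool) : Prop :=
  forall j, (j < n)%N -> a j -> g j = G2.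

Definition makespan (n : nat) (p : nat -> R) (a : nat -> bool) : R :=
  Num.max (\sum_(j < n | ~~ a j) p j) (\sum_(j < n | a j) p j).

Definition opt_is_one (n : nat) (p : nat -> R) (g : nat -> gos) : Prop :=
  (exists a, feasible n g a /\ makespan n p a <= 1) /\
  (forall a, feasible n g a -> 1 <= makespan n p a).

End AlgD.

From mathcomp Require Import all_boot all_order all_algebra ring lra.
Import Order.TTheory GRing.Theory Num.Theory.
Set Implicit Arguments. Unset Strict Implicit. Unset Printing Implicit Defensive.
Local Open Scope ring_scope.

(* Migration is bounded by the choice of W, and the load of m2 never exceeds 2 - M.
   Once m2 carries at least M, Step 2 freezes it, and m1 gets at most 2 - M
   because the total size is at most 2. Otherwise m2 stays below M throughout;
   since every migration lifts m2 to at least M, no job ever migrates, and m1 holds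
   the GoS-1 jobs and the rejected GoS-2 jobs. A rejected job r is larger than
   2 - 2M >= 1/2, and Step 4 or 5 exhibits a set Q of jobs on m2, each too large to
   share a machine with r in an optimal schedule, of total size at least
   p_r + M - 1. Fix an optimal schedule. Its machine m1 contains all GoS-1 jobs
   and all rejected jobs except at most one, r (two rejected jobs exceed 1); if r
   exists, m1 also contains Q, so Algorithm D loads m1 with at most
   1 - (p_r + M - 1) + p_r = 2 - M. *)

Lemma last_filter_iota_max (P : pred nat) d a N k :
  k \in filter P (iota a N) -> (k <= last d (filter P (iota a N)))%N.
Proof.
elim: N a d => [|N IH] a d //=; case: ifP => [Pa|_] /=; last exact: IH.
rewrite inE => /predU1P [->|]; last exact: IH.
have := mem_last a (filter P (iota a.+1 N)).
by rewrite inE mem_filter mem_iota => /predU1P [->|/and3P [_ /ltnW]].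
Qed.

Lemma head_filter_iota_min (P : pred nat) d a N k :
  k \in filter P (iota a N) -> (head d (filter P (iota a N)) <= k)%N.
Proof.
elim: N a d => [|N IH] a d //=; case: ifP => [Pa|_] /=; last exact: IH.
by rewrite inE mem_filter mem_iota => /predU1P [->|/and3P [_ /ltnW]].
Qed.

Lemma mem_nth_drop (T : eqType) (x0 : T) k s :
  (k < size s)%N -> nth x0 s k \in drop k s.
Proof. by move=> ks; rewrite -[k in nth _ _ k]addn0 -nth_drop mem_nth // size_drop subn_gt0. Qed.

Lemma mem_nth_take (T : eqType) (x0 : T) k s i :
  (i < k)%N -> (i < size s)%N -> nth x0 s i \in take k s.
Proof. by move=> ik si; rewrite -(nth_take x0 ik) mem_nth // size_take; case: ifP. Qed.

Section Load.
Variables (R : realFieldType) (p : nat -> R).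
Implicit Types (s Y : seq nat).

Lemma jload_nil : jload p [::] = 0.
Proof. exact: big_nil. Qed.

Lemma jload_cons i s : jload p (i :: s) = p i + jload p s.
Proof. exact: big_cons. Qed.

Lemma jload_cat s1 s2 : jload p (s1 ++ s2) = jload p s1 + jload p s2.
Proof. exact: big_cat. Qed.

Lemma jload_perm s1 s2 : perm_eq s1 s2 -> jload p s1 = jload p s2.
Proof. exact: perm_big. Qed.

Lemma jload_sortY Y : jload p (sortY p Y) = jload p Y.
Proof. by apply: jload_perm; rewrite perm_sort. Qed.

Lemma jload_take_drop k s : jload p (take k s) + jload p (drop k s) = jload p s.
Proof. by rewrite -jload_cat cat_take_drop. Qed.

Lemma jload_take_nth k s : (k < size s)%N ->
  jload p (take k.+1 s) = jload p (take k s) + p (nth 0%N s k).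
Proof. by move=> ks; rewrite (take_nth 0%N ks) -cats1 jload_cat jload_cons jload_nil addr0. Qed.

Lemma jload_ge0 s : {in s, forall i, 0 <= p i} -> 0 <= jload p s.
Proof. by move=> s0; rewrite /jload big_seq; apply: sumr_ge0. Qed.

Lemma mem_le_jload s i : {in s, forall i, 0 <= p i} -> i \in s -> p i <= jload p s.
Proof.
move=> s0 /perm_to_rem/jload_perm ->; rewrite jload_cons lerDl.
by apply: jload_ge0 => k /mem_rem /s0.
Qed.

Lemma jload_subset_le s t : uniq s -> uniq t -> {subset s <= t} ->
  {in t, forall i, 0 <= p i} -> jload p s <= jload p t.
Proof.
move=> us ut st t0; rewrite -(jload_perm (permEl (perm_filterC (mem s) t))) jload_cat.
have -> : jload p (filter (mem s) t) = jload p s.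
  apply/jload_perm/uniq_perm; rewrite ?filter_uniq // => i.
  by rewrite mem_filter andb_idr //; apply: st.
by rewrite lerDl; apply: jload_ge0 => i /[!mem_filter] /andP [_ /t0].
Qed.

Lemma sum_ord_jload n (P : pred nat) :
  \sum_(i < n | P i) p i = jload p (filter P (iota 0 n)).
Proof. by rewrite /jload big_filter -big_mkord /index_iota subn0. Qed.

Lemma sortY_take_drop Y k i i' :
  i \in take k (sortY p Y) -> i' \in drop k (sortY p Y) -> p i' <= p i.
Proof.
have tr : transitive (fun a b => p b <= p a) by move=> a b c /= ba cb; exact: le_trans cb ba.
move=> ii' i'd; have := sort_sorted (fun a b => le_total (p b) (p a)) Y.
rewrite (sorted_pairwise tr) -(cat_take_drop k (sort _ Y)) pairwise_cat.
by case/and3P => /allrelP le_td _ _; apply: le_td.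
Qed.

Lemma longest_leP b s : 0 <= b ->
  let k := longest_le p b s in
  [/\ jload p (take k s) <= b &
      forall m, (m <= size s)%N -> jload p (take m s) <= b -> (m <= k)%N].
Proof.
move=> b0; rewrite /longest_le; split=> [|m ms mb].
  have := mem_last 0%N [seq k <- iota 0 (size s).+1 | jload p (take k s) <= b].
  by rewrite inE mem_filter => /predU1P [->|/andP []//]; rewrite take0 jload_nil.
by apply: last_filter_iota_max; rewrite mem_filter mb mem_iota.
Qed.

Lemma shortest_geP b s :
  let k := shortest_ge p b s in
  [/\ (k <= size s)%N, b <= jload p (take k s) \/ k = size s &
      forall m, (m < k)%N -> jload p (take m s) < b].
Proof.
rewrite /shortest_ge; set k := head _ _.
have kmin m : (m <= size s)%N -> b <= jload p (take m s) -> (k <= m)%N.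
  by move=> ms mb; apply: head_filter_iota_min; rewrite mem_filter mb mem_iota.
have ks : (k <= size s)%N.
  rewrite /k; case E: filter => [|x t] //=.
  by have := mem_head x t; rewrite -E mem_filter mem_iota ltnS => /and3P [].
split=> // [|m mk].
  rewrite /k; case E: filter => [|x t] /=; first by right.
  by left; have := mem_head x t; rewrite -E mem_filter => /andP [].
rewrite ltNge; apply/negP => mb.
by have := kmin m (leq_trans (ltnW mk) ks) mb; rewrite leqNgt mk.
Qed.

End Load.

Section Split.
Variables (R : realFieldType) (M : R) (p : nat -> R) (j : nat) (Y : seq nat).

Definition split_step4 : seq nat * seq nat :=
  let sY := sortY p Y in
  let k := longest_le p (M * p j) sY in (take k sY, drop k sY).

Definition split_step5 : seq nat * seq nat :=
  let sY := sortY p Y in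
  let k := shortest_ge p (M / 3) sY in
  if Num.min (2 * M / 3) (M * p j) < jload p (take k sY)
  then (drop k sY, take k sY) else (take k sY, drop k sY).

Definition splitD : seq nat * seq nat :=
  if M <= p j then split_step4 else split_step5.

Lemma perm_splitD : perm_eq (splitD.1 ++ splitD.2) Y.
Proof.
have sYY : perm_eq (sortY p Y) Y by rewrite perm_sort.
apply: perm_trans sYY; rewrite /splitD /split_step4 /split_step5.
case: ifP => _ /=; last case: ifP => _ /=; rewrite ?cat_take_drop //.
by rewrite perm_catC cat_take_drop.
Qed.

Definition overflow_state : Prop :=
  [/\ 2 / 3 <= M < 3 / 4, p j <= 1, {in Y, forall i, 0 <= p i},
      jload p Y < M & 2 - M < jload p Y + p j].

Definition rejection_witness (Q : seq nat) : Prop :=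
  {in Q, forall i, 1 < p i + p j} /\ p j + M - 1 <= jload p Q.

Let sY := sortY p Y.

Let jload_sY : jload p sY = jload p Y.
Proof. exact: jload_sortY. Qed.

Let sY_ge0 : {in Y, forall i, 0 <= p i} -> {in sY, forall i, 0 <= p i}.
Proof. by move=> Y0 i; rewrite mem_sort; apply: Y0. Qed.

Lemma split_step4_bounds W K : overflow_state -> M <= p j -> split_step4 = (W, K) ->
  jload p W <= M * p j /\ M <= p j + jload p K.
Proof.
case=> /andP [M23 _] _ /sY_ge0 sY0 _ _ Mpj [<- <-].
have Mpj0 : 0 <= M * p j by apply: mulr_ge0; lra.
split; first by have [] := longest_leP p sY Mpj0.
have : 0 <= jload p (drop (longest_le p (M * p j) sY) sY).
  by apply: jload_ge0 => i /mem_drop /sY0.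
lra.
Qed.

Lemma split_step4_reject W K : overflow_state -> M <= p j -> split_step4 = (W, K) ->
  2 - M < jload p Y - jload p W + p j -> exists2 Q, subseq Q sY & rejection_witness Q.
Proof.
case=> /andP [M23 M34] pj1 _ yM _ Mpj [<- _]; set k := longest_le _ _ _ => reject.
have Mpj0 : 0 <= M * p j by apply: mulr_ge0; lra.
have [Wle kmax] := longest_leP p sY Mpj0.
have ks : (k < size sY)%N.
  rewrite ltnNge; apply/negP => /take_oversize kY.
  by move: reject; rewrite kY jload_sY; lra.
set x := nth 0%N sY k; have jQ := jload_take_nth p ks; rewrite -/x in jQ.
have Q_gt : M * p j < jload p (take k.+1 sY).
  by rewrite ltNge; apply/negP => /(kmax _ ks); rewrite ltnn.
have x_min i : i \in take k.+1 sY -> p x <= p i.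
  rewrite (take_nth 0%N ks) mem_rcons inE => /predU1P [->//|ik].
  exact: sortY_take_drop ik (mem_nth_drop _ ks).
exists (take k.+1 sY); first exact: take_subseq.
have MM : M * M <= M * p j by apply: ler_wpM2l; lra.
split=> [i /x_min|]; nra.
Qed.

Lemma split_step5_bounds W K : overflow_state -> p j < M -> split_step5 = (W, K) ->
  jload p W <= M * p j /\ M <= p j + jload p K.
Proof.
case=> /andP [M23 M34] _ _ yM over pjM.
rewrite /split_step5 -/sY; set k := shortest_ge _ _ _.
have := jload_take_drop p k sY; rewrite jload_sY => jTD.
have Mpj : M / 2 <= M * p j by nra.
case: ifP => [|/negbT]; last rewrite -leNgt le_min => /andP [? ?] [<- <-].
  by rewrite gt_min => /orP [] ? [<- <-]; split; nra.
by split; lra.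
Qed.

Lemma split_step5_reject W K : overflow_state -> p j < M -> split_step5 = (W, K) ->
  2 - M < jload p Y - jload p W + p j -> exists2 Q, subseq Q sY & rejection_witness Q.
Proof.
case=> /andP [M23 M34] _ /sY_ge0 sY0 yM over pjM.
rewrite /split_step5 -/sY; set k := shortest_ge _ _ _.
have := jload_take_drop p k sY; rewrite jload_sY => jTD.
have [ks kge kmin] := shortest_geP p (M / 3) sY; rewrite -/k in ks kge kmin.
clearbody k.
case: ifP => _ [<- _] reject; last first.
  by case: kge => [|kY]; [|move: reject; rewrite kY take_size jload_sY]; lra.
have P_gt : 2 - 2 * M < jload p (take k sY) by lra.
clear jTD kge reject.
(* A prefix of two or more jobs weighs less than 2M/3 < 2 - 2M: its last job is
   no heavier than its first, and without the last job it weighs less than M/3. *)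
have k1 : k = 1%N.
  case: k ks kmin P_gt => [|[//|m]] ks kmin P_gt; exfalso.
    by move: P_gt; rewrite take0 jload_nil; lra.
  have x_le : p (nth 0%N sY m.+1) <= p (nth 0%N sY 0).
    apply: (@sortY_take_drop _ p Y m.+1); last exact: mem_nth_drop.
    by apply: mem_nth_take; rewrite // (leq_trans _ ks).
  have x0_le : p (nth 0%N sY 0) <= jload p (take m.+1 sY).
    apply: mem_le_jload => [i /mem_take /sY0 //|].
    by apply: mem_nth_take; rewrite // (leq_trans _ ks).
  move: P_gt; rewrite jload_take_nth //; have := kmin m.+1 (ltnSn _); lra.
move: ks P_gt; rewrite k1 => ks; rewrite jload_take_nth // take0 jload_nil add0r => x_gt.
exists (take 1 sY); first exact: take_subseq.
rewrite (take_nth 0%N ks) take0 /=.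
by split=> [i /[!inE] /eqP ->|]; rewrite ?jload_cons ?jload_nil; lra.
Qed.

Lemma splitD_bounds W K : overflow_state -> splitD = (W, K) ->
  jload p W <= M * p j /\ M <= p j + jload p K.
Proof.
rewrite /splitD; case: ifP => [Mpj|/negbT]; rewrite -?ltNge.
  by move=> ov; apply: split_step4_bounds.
by move=> pjM ov; apply: split_step5_bounds.
Qed.

Lemma splitD_reject W K : overflow_state -> splitD = (W, K) ->
  2 - M < jload p Y - jload p W + p j -> exists2 Q, subseq Q sY & rejection_witness Q.
Proof.
rewrite /splitD; case: ifP => [Mpj|/negbT]; rewrite -?ltNge.
  by move=> ov; apply: split_step4_reject.
by move=> pjM ov; apply: split_step5_reject.
Qed.

End Split.

Section Step.
Variables (R : realFieldType) (M : R) (p : nat -> R) (g : nat -> gos).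
Variables (j : nat) (X Y : seq nat).

Lemma stepDE : stepD M p g j (X, Y) =
  if gos_eqb (g j) G1 || (M <= jload p Y) then ((j :: X, Y), [::])
  else if jload p Y + p j <= 2 - M then ((X, j :: Y), [::])
  else if 2 - M < jload p Y - jload p (splitD M p j Y).1 + p j then ((j :: X, Y), [::])
  else (((splitD M p j Y).1 ++ X, j :: (splitD M p j Y).2), (splitD M p j Y).1).
Proof. by []. Qed.

Lemma perm_stepD : let s := (stepD M p g j (X, Y)).1 in perm_eq (s.1 ++ s.2) (j :: X ++ Y).
Proof.
rewrite stepDE; case: ifP => _ /=; first by rewrite perm_refl.
case: ifP => _ /=; first by rewrite -cat1s perm_catCA.
case: ifP => _ /=; first by rewrite perm_refl.
rewrite -cat1s perm_catCA /= perm_cons -catA perm_catCA perm_cat2l.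
exact: perm_splitD.
Qed.

Lemma stepD_load_le : jload p Y <= 2 - M ->
  jload p (stepD M p g j (X, Y)).1.2 <= 2 - M.
Proof.
move=> yle; rewrite stepDE; case: ifP => //= _.
case: ifP => [|_] /=; first by rewrite jload_cons addrC.
case: ifP => //= /negbT; rewrite -leNgt jload_cons => accept.
by move: accept (jload_perm p (perm_splitD M p j Y)); rewrite jload_cat; lra.
Qed.

Lemma stepD_to_m1 : gos_eqb (g j) G1 || (M <= jload p Y) ->
  stepD M p g j (X, Y) = ((j :: X, Y), [::]).
Proof. by rewrite stepDE => ->. Qed.

Lemma stepD_fits : g j = G2 -> jload p Y < M -> jload p Y + p j <= 2 - M ->
  stepD M p g j (X, Y) = ((X, j :: Y), [::]).
Proof. by rewrite stepDE => -> yM ->; rewrite leNgt yM. Qed.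

Lemma stepD_overflow : overflow_state M p j Y -> g j = G2 ->
  (stepD M p g j (X, Y) = ((j :: X, Y), [::]) /\
     exists2 Q, subseq Q (sortY p Y) & rejection_witness M p j Q) \/
  exists W K, [/\ stepD M p g j (X, Y) = ((W ++ X, j :: K), W),
                  jload p W <= M * p j & M <= jload p (j :: K)].
Proof.
move=> ov gj; have [_ _ _ yM over] := ov.
rewrite stepDE gj /= (leNgt M) yM (leNgt (_ + p j)) over /=.
case E: (splitD M p j Y) => [W K] /=; case: ifP => reject.
  by left; split=> //; apply: splitD_reject E reject.
by right; exists W, K; rewrite jload_cons; split=> //; case: (splitD_bounds ov E).
Qed.

End Step.

Section Run.
Variables (R : realFieldType) (M : R) (p : nat -> R) (g : nat -> gos).

Definition XD j := (runD M p g j).1.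
Definition YD j := (runD M p g j).2.

Lemma XD_succ j : XD j.+1 = (stepD M p g j (XD j, YD j)).1.1.
Proof. by rewrite {1}/XD /= /XD /YD; case: runD. Qed.

Lemma YD_succ j : YD j.+1 = (stepD M p g j (XD j, YD j)).1.2.
Proof. by rewrite {1}/YD /= /XD /YD; case: runD. Qed.

Lemma migratedDE j : migratedD M p g j = (stepD M p g j (XD j, YD j)).2.
Proof. by rewrite /migratedD /XD /YD; case: runD. Qed.

Lemma perm_runD j : perm_eq (XD j ++ YD j) (iota 0 j).
Proof.
elim: j => [//|j IH]; rewrite XD_succ YD_succ.
apply: perm_trans (perm_stepD M p g j (XD j) (YD j)) _.
by rewrite perm_sym -addn1 iotaD perm_catC add0n /= perm_cons perm_sym.
Qed.

Lemma uniq_runD j : uniq (XD j ++ YD j).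
Proof. by rewrite (perm_uniq (perm_runD j)) iota_uniq. Qed.

Lemma uniq_XD j : uniq (XD j).
Proof. by have := uniq_runD j; rewrite cat_uniq => /and3P []. Qed.

Lemma uniq_YD j : uniq (YD j).
Proof. by have := uniq_runD j; rewrite cat_uniq => /and3P []. Qed.

Lemma mem_runD_lt j i : i \in XD j ++ YD j -> (i < j)%N.
Proof. by rewrite (perm_mem (perm_runD j)) mem_iota. Qed.

Lemma mem_XD_lt j i : i \in XD j -> (i < j)%N.
Proof. by move=> iX; apply: mem_runD_lt; rewrite mem_cat iX. Qed.

Lemma mem_YD_lt j i : i \in YD j -> (i < j)%N.
Proof. by move=> iY; apply: mem_runD_lt; rewrite mem_cat iY orbT. Qed.

Lemma mem_YD_notin_XD j i : i \in YD j -> i \notin XD j.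
Proof.
move=> iY; apply/negP => iX; move: (uniq_runD j); rewrite cat_uniq => /and3P [_ /hasP []].
by exists i.
Qed.

Lemma YD_load_le j : M <= 2 -> jload p (YD j) <= 2 - M.
Proof.
move=> M2; elim: j => [|j IH]; first by rewrite /YD /= jload_nil subr_ge0.
by rewrite YD_succ; apply: stepD_load_le.
Qed.

Lemma YD_full_stable j d : M <= jload p (YD j) -> YD (j + d) = YD j.
Proof.
move=> full; elim: d => [|d IH]; first by rewrite addn0.
by rewrite addnS YD_succ stepD_to_m1 IH // full orbT.
Qed.

Lemma migratedD_le n j : 2 / 3 <= M -> M < 3 / 4 ->
  (forall i, (i < n)%N -> 0 <= p i) -> (forall i, (i < n)%N -> p i <= 1) ->
  (j < n)%N -> jload p (migratedD M p g j) <= M * p j.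
Proof.
move=> M23 M34 p0 p1 jn; rewrite migratedDE.
have Mpj0 : 0 <= M * p j by apply: mulr_ge0; [lra | exact: p0].
have Y0 : {in YD j, forall i, 0 <= p i}.
  by move=> i /mem_YD_lt /ltn_trans /(_ jn) /p0.
case: (boolP (gos_eqb (g j) G1 || (M <= jload p (YD j)))) => [to_m1|].
  by rewrite stepD_to_m1 // jload_nil.
rewrite negb_or -ltNge => /andP [notG1 yM]; have gj : g j = G2 by case: (g j) notG1.
case: (leP (jload p (YD j) + p j) (2 - M)) => [fit|over].
  by rewrite stepD_fits // jload_nil.
have ov : overflow_state M p j (YD j) by split; rewrite ?M23 ?M34 //; apply: p1.
by case: (stepD_overflow (XD j) ov gj) => [[-> _]|[W [K [-> Wle _]]]]; rewrite ?jload_nil.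
Qed.

End Run.

Section Offline.
Variables (R : realFieldType) (n : nat) (p : nat -> R) (a : nat -> bool).
Hypotheses (p0 : forall i, (i < n)%N -> 0 <= p i) (opt1 : makespan n p a <= 1).

Lemma jload_side_le b s : uniq s -> {in s, forall i, (i < n)%N /\ a i = b} ->
  jload p s <= 1.
Proof.
move=> us sb; apply: (le_trans _ opt1).
have : jload p s <= \sum_(i < n | a i == b) p i.
  rewrite (sum_ord_jload p n (fun i => a i == b)); apply: jload_subset_le.
  - exact: us.
  - by rewrite filter_uniq ?iota_uniq.
  - by move=> i /sb [ilt aib]; rewrite mem_filter mem_iota aib eqxx.
  - by move=> i /[!mem_filter] /andP [_] /[!mem_iota] /andP [_ /p0].
have -> : \sum_(i < n | a i == b) p i =
          if b then \sum_(i < n | a i) p i else \sum_(i < n | ~~ a i) p i.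
  by case: b {sb}; apply: eq_bigl => i; case: (a i).
by move/le_trans; apply; rewrite /makespan; case: b {sb}; rewrite le_max lexx ?orbT.
Qed.

Lemma job_size_le1 i : (i < n)%N -> p i <= 1.
Proof.
move=> il; have := @jload_side_le (a i) [:: i]; rewrite jload_cons jload_nil addr0.
by apply=> // k /[!inE] /eqP ->.
Qed.

Lemma pair_side_le i k : i != k -> (i < n)%N -> (k < n)%N -> a i = a k -> p i + p k <= 1.
Proof.
move=> ik il kl aik; have := @jload_side_le (a k) [:: i; k].
rewrite !jload_cons jload_nil addr0; apply; first by rewrite /= inE ik.
by move=> x /[!inE] /orP [] /eqP ->.
Qed.

Lemma jload_le2 s : uniq s -> {in s, forall i, (i < n)%N} -> jload p s <= 2.
Proof.
move=> us sn; rewrite -(jload_perm p (permEl (perm_filterC a s))) jload_cat.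
have side1 : jload p (filter a s) <= 1.
  apply: (@jload_side_le true); first by rewrite filter_uniq.
  by move=> i /[!mem_filter] /andP [ai /sn].
have side0 : jload p (filter (predC a) s) <= 1.
  apply: (@jload_side_le false); first by rewrite filter_uniq.
  by move=> i /[!mem_filter] /andP [/negbTE ai /sn].
lra.
Qed.

End Offline.

Section Regime.
Variables (R : realFieldType) (M : R) (p : nat -> R) (g : nat -> gos) (n : nat).
Hypotheses (M23 : 2 / 3 <= M) (M34 : M < 3 / 4).
Hypotheses (p0 : forall i, (i < n)%N -> 0 <= p i) (p1 : forall i, (i < n)%N -> p i <= 1).
Hypothesis (regime : jload p (YD M p g n) < M).

Local Notation XD := (XD M p g).
Local Notation YD := (YD M p g).

Lemma regime_YD_load_lt j : (j <= n)%N -> jload p (YD j) < M.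
Proof.
move=> jn; rewrite ltNge; apply/negP => full.
by move: regime; rewrite -(subnKC jn) YD_full_stable // ltNge full.
Qed.

Definition rejectedD j : Prop :=
  2 - M < jload p (YD j) + p j /\
  exists2 Q, subseq Q (sortY p (YD j)) & rejection_witness M p j Q.

Lemma regime_step j : (j < n)%N ->
  [/\ XD j.+1 = j :: XD j, YD j.+1 = YD j & g j = G1 \/ rejectedD j] \/
  XD j.+1 = XD j /\ YD j.+1 = j :: YD j.
Proof.
move=> jn; have yM := regime_YD_load_lt (ltnW jn); have yM' := regime_YD_load_lt jn.
rewrite XD_succ YD_succ in yM' *; case gj: (g j).
  by left; rewrite stepD_to_m1 ?gj //; split=> //; left.
case: (leP (jload p (YD j) + p j) (2 - M)) => [fit|over].
  by right; rewrite stepD_fits.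
have Y0 : {in YD j, forall i, 0 <= p i}.
  by move=> i /mem_YD_lt /ltn_trans /(_ jn) /p0.
have ov : overflow_state M p j (YD j) by split; rewrite ?M23 ?M34 //; apply: p1.
case: (stepD_overflow (XD j) ov gj) => [[-> rej]|[W [K [E _ MK]]]].
  by left; split=> //; right; split.
by move: yM'; rewrite E /= ltNge MK.
Qed.

Lemma mem_XD_regime j : (j <= n)%N -> {in XD j, forall i, g i = G1 \/ rejectedD i}.
Proof.
elim: j => [//|j IH] jn i; have IH' := IH (ltnW jn).
case: (regime_step jn) => [[-> _ hj]|[-> _]]; last exact: IH'.
by rewrite inE => /predU1P [->|/IH'].
Qed.

Lemma regime_YD_sub j k : (j <= k)%N -> (k <= n)%N -> {subset YD j <= YD k}.
Proof.
elim: k => [|k IH]; first by rewrite leqn0 => /eqP ->.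
rewrite leq_eqVlt ltnS => /predU1P [-> _ //|jk kn i /(IH jk (ltnW kn)) iY].
by case: (regime_step kn) => [[_ -> _]|[_ ->]] //; rewrite inE iY orbT.
Qed.

Lemma rejectedD_size_gt r : (r <= n)%N -> rejectedD r -> 2 - 2 * M < p r.
Proof. by move=> rn [over _]; have := regime_YD_load_lt rn; lra. Qed.

Section OfflineSchedule.
Variable a : nat -> bool.
Hypotheses (feas : feasible n g a) (opt1 : makespan n p a <= 1).

Lemma XD_side_true_rejected r : r \in XD n -> a r -> rejectedD r.
Proof.
move=> rX ar; case: (mem_XD_regime (leqnn n) rX) => // gr.
by move: (feas (mem_XD_lt rX) ar); rewrite gr.
Qed.

Lemma XD_side_true_uniq r i : r \in XD n -> i \in XD n -> a r -> a i -> i = r.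
Proof.
move=> rX iX ar ai; apply/eqP/negPn/negP => ir.
have rn := mem_XD_lt rX; have il := mem_XD_lt iX.
have := pair_side_le p0 opt1 ir il rn (etrans ai (esym ar)).
have := rejectedD_size_gt (ltnW rn) (XD_side_true_rejected rX ar).
have := rejectedD_size_gt (ltnW il) (XD_side_true_rejected iX ai).
(* [lra] does not use section hypotheses, hence the explicit [have := M34]. *)
by have := M34; lra.
Qed.

Lemma witness_sub_YD r Q : (r <= n)%N -> subseq Q (sortY p (YD r)) -> {subset Q <= YD n}.
Proof.
move=> rn sQ i /(mem_subseq sQ); rewrite mem_sort; exact: regime_YD_sub rn (leqnn n) i.
Qed.

Lemma witness_side_false r Q : r \in XD n -> a r -> subseq Q (sortY p (YD r)) ->
  rejection_witness M p r Q -> {in Q, forall i, (i < n)%N /\ a i = false}.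
Proof.
move=> rX ar sQ [Qconf _] i iQ.
have iY := witness_sub_YD (ltnW (mem_XD_lt rX)) sQ iQ.
split; first exact: mem_YD_lt iY.
apply/negbTE/negP => ai; have ir : i != r.
  by apply: contraNneq (mem_YD_notin_XD iY) => ->.
have := pair_side_le p0 opt1 ir (mem_YD_lt iY) (mem_XD_lt rX) (etrans ai (esym ar)).
by have := Qconf i iQ; lra.
Qed.

Lemma regime_XD_load_le : jload p (XD n) <= 2 - M.
Proof.
have uX := uniq_XD M p g n.
case: (boolP (has a (XD n))) => [/hasP [r rX ar]|/hasPn noa]; last first.
  have := @jload_side_le _ n p a p0 opt1 false (XD n) uX.
  by move=> /(_ (fun i iX => conj (mem_XD_lt iX) (negbTE (noa i iX)))); have := M34; lra.
have [_ [Q sQ wQ]] := XD_side_true_rejected rX ar.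
have Qside := witness_side_false rX ar sQ wQ.
have uXQ : uniq (rem r (XD n) ++ Q).
  rewrite cat_uniq rem_uniq // (subseq_uniq sQ) ?sort_uniq ?uniq_YD // andbT.
  apply/hasPn => i /(witness_sub_YD (ltnW (mem_XD_lt rX)) sQ) /mem_YD_notin_XD.
  by apply: contra; apply: mem_rem.
have XQside : {in rem r (XD n) ++ Q, forall i, (i < n)%N /\ a i = false}.
  move=> i; rewrite mem_cat (mem_rem_uniq _ uX) => /orP [/andP [ir iX]|/Qside //].
  split; first exact: mem_XD_lt iX.
  by apply/negbTE/negP => ai; move: ir; rewrite (XD_side_true_uniq rX iX ar ai) eqxx.
have := jload_side_le p0 opt1 uXQ XQside.
by rewrite (jload_perm p (perm_to_rem rX)) jload_cons jload_cat; case: wQ => _; lra.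
Qed.

End OfflineSchedule.

End Regime.

Theorem mainTheorem13 (R : realFieldType) (M : R) :
  2 / 3 <= M -> M < 3 / 4 ->
  forall (n : nat) (p : nat -> R) (g : nat -> gos),
    (forall j, (j < n)%N -> 0 < p j) ->
    opt_is_one n p g ->
    (forall j, (j < n)%N -> jload p (migratedD M p g j) <= M * p j) /\
    makespanD M p g n <= 2 - M.
Proof.
move=> M23 M34 n p g pos [[a [feas opt1]] _].
have p0 i : (i < n)%N -> 0 <= p i by move/pos/ltW.
have p1 := job_size_le1 p0 opt1.
split=> [j|]; first exact: migratedD_le.
have -> : makespanD M p g n = Num.max (jload p (XD M p g n)) (jload p (YD M p g n)).
  by rewrite /makespanD /XD /YD; case: runD.
rewrite ge_max YD_load_le ?andbT; last lra.
case: (leP M (jload p (YD M p g n))) => [full|regime].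
  have := jload_le2 p0 opt1 (uniq_runD M p g n) (@mem_runD_lt _ M p g n).
  by rewrite jload_cat; lra.
exact: (regime_XD_load_le M23 M34 p0 p1 regime feas opt1).
Qed.
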